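(* Let $a,b,c,d>0$, $\theta>0$ satisfy $-(\theta a+\theta^2 b)<(\theta-1)(\theta+1)^2<\theta c+\theta^2 d$, let $\mu\in(0,1]$, and consider on $\mathcal{I}=[0,1]^2$ the system $$\dot x=x(1-x)\big[xr(-c+d-a+b)+x(a-b)-r(d+b)+b\big]+\mu(1-2x),\qquad \dot r=r(1-r)\big[\theta x-(1-x)\big].$$ Then the system has exactly one equilibrium on the side $\mathcal{B}_b=\{(x,0):x\in[0,1]\}$ and exactly one equilibrium on the side $\mathcal{B}_t=\{(x,1):x\in[0,1]\}$. Moreover, the equilibrium on $\mathcal{B}_b$ lies in $\{(x,0): x\in(\max\{1/2,1/(\theta+1)\},1)\}$ and the equilibrium on $\mathcal{B}_t$ lies in $\{(x,1): x\in(0,\min\{1/2,1/(\theta+1)\})\}$. *)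

From mathcomp Require Import all_boot all_order all_algebra.
Set Implicit Arguments. Unset Strict Implicit. Unset Printing Implicit Defensive.
Import Order.TTheory GRing.Theory Num.Theory.
Local Open Scope ring_scope.

Definition fx (R : realFieldType) (a b c d mu : R) (x r : R) : R :=
  x * (1 - x) * (x * r * (- c + d - a + b) + x * (a - b) - r * (d + b) + b)
  + mu * (1 - 2 * x).

Definition fr (R : realFieldType) (theta : R) (x r : R) : R :=
  r * (1 - r) * (theta * x - (1 - x)).

Definition is_equilibrium (R : realFieldType) (a b c d theta mu : R) (x r : R) : Prop :=
  fx a b c d mu x r = 0 /\ fr theta x r = 0.

From mathcomp Require Import all_boot all_order all_algebra.
From mathcomp Require Import ring lra.
Set Implicit Arguments. Unset Strict Implicit. Unset Printing Implicit Defensive.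
Import Order.TTheory GRing.Theory Num.Theory.
Local Open Scope ring_scope.

(** On the side [r = 0] the x-component of the field reduces to
    [x (1 - x) (x a + (1 - x) b) + mu (1 - 2 x)], and on the side [r = 1], after
    the reflection [x |-> 1 - x], to minus the same expression with [(a, b)]
    replaced by [(d, c)]; the r-component vanishes on both sides.  This edge field
    is positive on [[0, 1/2]] and equals [-mu] at [1], and on [(1/2, 1)] its zeros
    are the solutions of [x (1 - x) (x a + (1 - x) b) / (2 x - 1) = mu], whose
    left-hand side is strictly decreasing: so it has exactly one zero in [[0, 1]].
    Since the field is affine in [mu], its sign at [1/(theta + 1)] for
    [mu] in [(0, 1]] follows from the sign for [mu = 1], which is exactly the
    hypothesis on [theta]; the intermediate value theorem then places the zero to
    the right of [1/(theta + 1)]. *)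

Definition edge_poly {R : realFieldType} (a b x : R) : R :=
  x * (1 - x) * (x * a + (1 - x) * b).

Definition edge_field {R : realFieldType} (a b mu x : R) : R :=
  edge_poly a b x + mu * (1 - 2 * x).

Section EdgeField.
Variables (R : realFieldType) (a b : R).
Hypotheses (ha : 0 < a) (hb : 0 < b).

Lemma edge_poly_gt0 x : 0 < x < 1 -> 0 < edge_poly a b x.
Proof.
move=> /andP[hx0 hx1]; rewrite /edge_poly.
apply: mulr_gt0; first by apply: mulr_gt0; lra.
by apply: addr_gt0; apply: mulr_gt0 => //; lra.
Qed.

Lemma edge_field_gt0_le_half mu x :
  0 < mu -> 0 <= x <= 1 / 2 -> 0 < edge_field a b mu x.
Proof.
move=> hmu /andP[hx0 hx1]; rewrite /edge_field.
have [->|x_gt0] := eqVneq x 0; first by rewrite /edge_poly; lra.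
have : 0 < edge_poly a b x by apply: edge_poly_gt0; rewrite lt_def x_gt0; lra.
have : 0 <= mu * (1 - 2 * x) by apply: mulr_ge0; lra.
lra.
Qed.

Lemma edge_field1 mu : edge_field a b mu 1 = - mu.
Proof. by rewrite /edge_field /edge_poly; ring. Qed.

Lemma edge_poly_ratio_decr x y : 1 / 2 < x -> x < y -> y < 1 ->
  edge_poly a b y * (2 * x - 1) < edge_poly a b x * (2 * y - 1).
Proof.
move=> hx hxy hy; rewrite -subr_gt0 /edge_poly.
set u := 2 * x - 1; set v := 2 * y - 1.
have -> : x * (1 - x) * (x * a + (1 - x) * b) * v
          - y * (1 - y) * (y * a + (1 - y) * b) * u
  = (y - x) / 4 * (b * (1 + u * v * (1 - u - v)) + a * (1 + u * v * (1 + u + v))).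
  by rewrite /u /v; field.
have [hu hu1 hv hv1] : [/\ 0 < u, u < 1, 0 < v & v < 1] by split; rewrite /u /v; lra.
have huv : 0 < u * v < 1 by apply/andP; split; nra.
apply: mulr_gt0; first by apply: divr_gt0; lra.
by apply: addr_gt0; apply: mulr_gt0 => //; nra.
Qed.

Lemma edge_field_root_gt_half mu x : 0 < mu -> 0 <= x <= 1 ->
  edge_field a b mu x = 0 -> 1 / 2 < x < 1.
Proof.
move=> hmu /andP[hx0 hx1] ex; apply/andP; split.
  rewrite ltNge; apply/negP => hx.
  by have := @edge_field_gt0_le_half mu x hmu; rewrite hx0 hx ex ltxx => /(_ isT).
rewrite lt_neqAle hx1 andbT; apply/eqP => x1.
by move: ex; rewrite x1 edge_field1; lra.
Qed.

Lemma edge_field_root_uniq mu x y : 0 < mu -> 0 <= x <= 1 -> 0 <= y <= 1 ->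
  edge_field a b mu x = 0 -> edge_field a b mu y = 0 -> x = y.
Proof.
move=> hmu hx hy ex ey.
have /andP[hx1 hx2] := edge_field_root_gt_half hmu hx ex.
have /andP[hy1 hy2] := edge_field_root_gt_half hmu hy ey.
have px : edge_poly a b x = mu * (2 * x - 1) by move: ex; rewrite /edge_field; lra.
have py : edge_poly a b y = mu * (2 * y - 1) by move: ey; rewrite /edge_field; lra.
case: (ltgtP x y) => // hxy.
- by have := edge_poly_ratio_decr hx1 hxy hy2; rewrite px py mulrAC ltxx.
- by have := edge_poly_ratio_decr hy1 hxy hx2; rewrite px py mulrAC ltxx.
Qed.

Lemma edge_field_gt0_mu_le1 mu t : 0 < t < 1 -> 0 < edge_field a b 1 t ->
  0 < mu <= 1 -> 0 < edge_field a b mu t.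
Proof.
move=> ht h1 /andP[hmu0 hmu1].
have -> : edge_field a b mu t = (1 - mu) * edge_poly a b t + mu * edge_field a b 1 t.
  by rewrite /edge_field; ring.
have : 0 <= (1 - mu) * edge_poly a b t.
  by apply: mulr_ge0; [lra | apply/ltW/edge_poly_gt0].
have : 0 < mu * edge_field a b 1 t by apply: mulr_gt0.
lra.
Qed.

End EdgeField.

Lemma edge_field_root_exists (R : rcfType) (a b mu t : R) :
  0 < a -> 0 < b -> 0 < mu -> 0 < t < 1 -> 0 < edge_field a b mu t ->
  exists x, Num.max (1 / 2) t < x < 1 /\ edge_field a b mu x = 0.
Proof.
move=> ha hb hmu ht hgt; set m := Num.max (1 / 2) t.
have hm : 0 < edge_field a b mu m.
  by rewrite /m; case: (leP (1 / 2) t) => // _; apply: edge_field_gt0_le_half => //; lra.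
have hm1 : m < 1 by rewrite /m gt_max; apply/andP; split; lra.
pose p : {poly R} :=
  - ('X * (1 - 'X) * ('X * a%:P + (1 - 'X) * b%:P) + mu%:P * (1 - 2%:P * 'X)).
have pE t' : p.[t'] = - edge_field a b mu t'.
  by rewrite /p /edge_field /edge_poly !hornerE.
have [x /andP[hmx hx1]] : exists2 x, m <= x <= 1 & root p x.
  by apply: poly_ivt; rewrite ?pE ?edge_field1; lra.
rewrite rootE pE oppr_eq0 => /eqP ex.
exists x; split => //; apply/andP; split.
- by rewrite lt_neqAle hmx andbT; apply/eqP => mx; move: hm; rewrite mx ex ltxx.
- by rewrite lt_neqAle hx1 andbT; apply/eqP => x1; move: ex; rewrite x1 edge_field1; lra.
Qed.

Lemma edge_field_unique_root (R : rcfType) (a b mu t : R) :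
  0 < a -> 0 < b -> 0 < mu -> 0 < t < 1 -> 0 < edge_field a b mu t ->
  exists x, Num.max (1 / 2) t < x < 1 /\ edge_field a b mu x = 0 /\
    forall y, 0 <= y <= 1 -> edge_field a b mu y = 0 -> y = x.
Proof.
move=> ha hb hmu ht hgt.
have [x [hx ex]] := edge_field_root_exists ha hb hmu ht hgt.
have hx01 : 0 <= x <= 1 by move: hx; rewrite gt_max => /andP[/andP[? ?] ?]; lra.
exists x; split => //; split => // y hy ey.
exact: edge_field_root_uniq ey ex.
Qed.

Section Sides.
Variables (R : realFieldType) (a b c d theta mu : R).

Lemma is_equilibrium_bottom x :
  is_equilibrium a b c d theta mu x 0 <-> edge_field a b mu x = 0.
Proof.
rewrite /is_equilibrium /fr.
have -> : fx a b c d mu x 0 = edge_field a b mu x.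
  by rewrite /fx /edge_field /edge_poly; ring.
by rewrite !mul0r; split => [[]|].
Qed.

Lemma is_equilibrium_top x :
  is_equilibrium a b c d theta mu x 1 <-> edge_field d c mu (1 - x) = 0.
Proof.
rewrite /is_equilibrium /fr.
have -> : fx a b c d mu x 1 = - edge_field d c mu (1 - x).
  by rewrite /fx /edge_field /edge_poly; ring.
rewrite subrr mulr0 mul0r.
by split => [[/eqP]|->]; rewrite ?oppr_eq0 ?oppr0 => // /eqP.
Qed.

End Sides.

Lemma edge_field_bottom_gt0 (R : realFieldType) (a b theta mu : R) :
  0 < a -> 0 < b -> 0 < theta -> 0 < mu <= 1 ->
  - (theta * a + theta ^+ 2 * b) < (theta - 1) * (theta + 1) ^+ 2 ->
  0 < edge_field a b mu (1 / (theta + 1)).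
Proof.
move=> ha hb htheta hmu hlow; have ht : 0 < theta + 1 by lra.
apply: edge_field_gt0_mu_le1 hmu => //.
  by rewrite divr_gt0 ?ltr_pdivrMr ?mul1r; lra.
have -> : edge_field a b 1 (1 / (theta + 1))
  = (theta * a + theta ^+ 2 * b + (theta - 1) * (theta + 1) ^+ 2) / (theta + 1) ^+ 3.
  by rewrite /edge_field /edge_poly; field; lra.
by apply: divr_gt0; [lra | apply: exprn_gt0].
Qed.

Lemma edge_field_top_gt0 (R : realFieldType) (c d theta mu : R) :
  0 < c -> 0 < d -> 0 < theta -> 0 < mu <= 1 ->
  (theta - 1) * (theta + 1) ^+ 2 < theta * c + theta ^+ 2 * d ->
  0 < edge_field d c mu (theta / (theta + 1)).
Proof.
move=> hc hd htheta hmu hupp; have ht : 0 < theta + 1 by lra.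
apply: edge_field_gt0_mu_le1 hmu => //.
  by rewrite divr_gt0 ?ltr_pdivrMr ?mul1r; lra.
have -> : edge_field d c 1 (theta / (theta + 1))
  = (theta * c + theta ^+ 2 * d - (theta - 1) * (theta + 1) ^+ 2) / (theta + 1) ^+ 3.
  by rewrite /edge_field /edge_poly; field; lra.
by apply: divr_gt0; [lra | apply: exprn_gt0].
Qed.

Theorem lemma11 (R : rcfType) (a b c d theta mu : R)
  (ha : 0 < a) (hb : 0 < b) (hc : 0 < c) (hd : 0 < d) (htheta : 0 < theta)
  (hlow : - (theta * a + theta ^+ 2 * b) < (theta - 1) * (theta + 1) ^+ 2)
  (hupp : (theta - 1) * (theta + 1) ^+ 2 < theta * c + theta ^+ 2 * d)
  (hmu0 : 0 < mu) (hmu1 : mu <= 1) :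
  (exists x : R,
      Num.max (1 / 2) (1 / (theta + 1)) < x < 1 /\
      is_equilibrium a b c d theta mu x 0 /\
      (forall y : R, 0 <= y <= 1 -> is_equilibrium a b c d theta mu y 0 -> y = x))
  /\
  (exists x : R,
      0 < x < Num.min (1 / 2) (1 / (theta + 1)) /\
      is_equilibrium a b c d theta mu x 1 /\
      (forall y : R, 0 <= y <= 1 -> is_equilibrium a b c d theta mu y 1 -> y = x)).
Proof.
have hmu : 0 < mu <= 1 by apply/andP.
have ht : 0 < theta + 1 by lra.
have ht_bot : 0 < 1 / (theta + 1) < 1 by rewrite divr_gt0 ?ltr_pdivrMr ?mul1r; lra.
have ht_top : 0 < theta / (theta + 1) < 1 by rewrite divr_gt0 ?ltr_pdivrMr ?mul1r; lra.
split.
- have [x [hx [ex uniq]]] := edge_field_unique_root ha hb hmu0 ht_bot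
    (edge_field_bottom_gt0 ha hb htheta hmu hlow).
  exists x; split => //; split; first exact/is_equilibrium_bottom.
  by move=> y hy /is_equilibrium_bottom; apply: uniq.
- have [z [hz [ez uniq]]] := edge_field_unique_root hd hc hmu0 ht_top
    (edge_field_top_gt0 hc hd htheta hmu hupp).
  exists (1 - z); split.
    have -> : 1 / (theta + 1) = 1 - theta / (theta + 1) by field; lra.
    by move: hz; rewrite gt_max lt_min => /andP[/andP[? ?] ?]; apply/andP; split; lra.
  split; first by apply/is_equilibrium_top; rewrite subKr.
  move=> y /andP[hy0 hy1] /is_equilibrium_top ey.
  by rewrite -(uniq (1 - y)) ?subKr //; apply/andP; split; lra.
Qed.
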